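(* In the retraining process below, with $\beta=\alpha\big((1+\tfrac1N)\alpha-\tfrac1N\big)$, for every $r\ge0$, $$S^{(r+1)}=\frac{\frac1N(1+2\alpha)+(1-\frac1N)(1+\alpha)S^{(0)}}{1+(1+\frac1N)\alpha}-\frac1N\Big(1-\frac1N\Big)\frac{(1-S^{(0)})\,\alpha\,\beta^{r}}{1+(1+\frac1N)\alpha},$$ and moreover, for each $k\in[s]$, $\nu_k^{(r)}:=\mathbb E[(p^{(r)}_k)^2]$ satisfies $$\nu_k^{(r+1)}=\frac{p^{(0)}_k}{N}\cdot\frac{1+2\alpha-(1-\frac1N)\alpha\beta^{r}}{1+(1+\frac1N)\alpha}+\Big(1-\frac1N\Big)(p^{(0)}_k)^2\cdot\frac{1+\alpha+\frac{\alpha}{N}\beta^{r}}{1+(1+\frac1N)\alpha}.$$ If $N>1$ and $\hat N>1$ then $\beta\in(0,1)$.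
   Context: Fix integers $s\ge2$, $N\ge1$, $\hat N\ge1$, let $\alpha=\hat N/(N+\hat N)$, and let $\mathbf p^{(0)}\in\Delta_s$ (probability simplex) with $S^{(0)}:=\|\mathbf p^{(0)}\|_2^2=\sum_k(p^{(0)}_k)^2$. Let $\mathbf e_1,\dots,\mathbf e_s$ be the standard basis of $\mathbb{R}^s$. Draw organic tokens $\mathbf z^{(0)}_1,\dots,\mathbf z^{(0)}_N$ i.i.d. with $\Pr(\mathbf z^{(0)}_n=\mathbf e_k)=p^{(0)}_k$; this same organic sample is used in every round. Set $\mathbf p^{(1)}=\frac1N\sum_{n=1}^N\mathbf z^{(0)}_n$. For $r\ge2$, conditionally on everything generated so far draw $\mathbf z^{(r-1)}_1,\dots,\mathbf z^{(r-1)}_{\hat N}$ i.i.d. with $\Pr(\mathbf z^{(r-1)}_n=\mathbf e_k)=p^{(r-1)}_k$, and set $\mathbf p^{(r)}=\frac{1}{N+\hat N}\big(\sum_{n=1}^N\mathbf z^{(0)}_n+\sum_{n=1}^{\hat N}\mathbf z^{(r-1)}_n\big)$. Let $S^{(r)}=\mathbb E[\|\mathbf p^{(r)}\|_2^2]$ for $r\ge1$. *)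

(* The retraining process is a finite Markov chain; all
   expectations are written as explicit finite sums over sample outcomes. *)
From HB Require Import structures.
From mathcomp Require Import all_boot all_order all_algebra.
Import Order.TTheory GRing.Theory Num.Theory.
Local Open Scope ring_scope.

Section Retrain.
Variable R : realFieldType.

Definition cnt (n s : nat) (z : {ffun 'I_n -> 'I_s}) (k : 'I_s) : nat :=
  #|[set i | z i == k]|.

Definition sample_prob (n s : nat) (q : 'I_s -> R) (z : {ffun 'I_n -> 'I_s}) : R :=
  \prod_(i < n) q (z i).

Definition p_first (N s : nat) (z0 : {ffun 'I_N -> 'I_s}) : 'I_s -> R :=
  fun k => (cnt N s z0 k)%:R / N%:R.

(* p^(r) = (sum_n z^(0)_n + sum_n z^(r-1)_n) / (N + Nhat) *)
Definition p_next (N Nh s : nat) (z0 : {ffun 'I_N -> 'I_s})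
  (zh : {ffun 'I_Nh -> 'I_s}) : 'I_s -> R :=
  fun k => ((cnt N s z0 k)%:R + (cnt Nh s zh k)%:R) / (N + Nh)%:R.

(* expect_from z0 m q g = E[ g(p^(r+m)) | z^(0) = z0, p^(r) = q ] *)
Fixpoint expect_from (N Nh s : nat) (z0 : {ffun 'I_N -> 'I_s}) (m : nat)
  (q : 'I_s -> R) (g : ('I_s -> R) -> R) : R :=
  match m with
  | 0 => g q
  | m'.+1 => \sum_(zh : {ffun 'I_Nh -> 'I_s})
               sample_prob Nh s q zh * expect_from N Nh s z0 m' (p_next N Nh s z0 zh) g
  end.

(* E[ g(p^(r)) ] for r >= 1 *)
Definition Exp_round (N Nh s : nat) (p0 : 'I_s -> R) (r : nat)
  (g : ('I_s -> R) -> R) : R :=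
  \sum_(z0 : {ffun 'I_N -> 'I_s})
     sample_prob N s p0 z0 * expect_from N Nh s z0 r.-1 (p_first N s z0) g.

Definition S_round (N Nh s : nat) (p0 : 'I_s -> R) (r : nat) : R :=
  Exp_round N Nh s p0 r (fun q => \sum_(k < s) q k ^+ 2).

Definition nu_round (N Nh s : nat) (p0 : 'I_s -> R) (r : nat) (k : 'I_s) : R :=
  Exp_round N Nh s p0 r (fun q => q k ^+ 2).

Definition S0 (s : nat) (p0 : 'I_s -> R) : R := \sum_(k < s) p0 k ^+ 2.

Definition alpha (N Nh : nat) : R := Nh%:R / (N + Nh)%:R.

Definition beta (N Nh : nat) : R :=
  alpha N Nh * ((1 + 1 / N%:R) * alpha N Nh - 1 / N%:R).

End Retrain.

From HB Require Import structures.
From mathcomp Require Import all_boot all_order all_algebra.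
From mathcomp Require Import ring lra.
Import Order.TTheory GRing.Theory Num.Theory.
Local Open Scope ring_scope.

(* Condition on the organic sample and let c be its number of tokens equal to
   e_k.  Given p^(r), the synthetic count of e_k is Binomial(Nh, p^(r)_k), so
   E[p^(r+1)_k | p^(r)] = (c + Nh p^(r)_k) / (N + Nh); as p^(1)_k = c/N is the
   fixed point of this map, the conditional mean of p^(r)_k stays c/N.  The
   conditional second moment then follows an affine recursion with ratio
   beta = Nh (Nh - 1) / (N + Nh)^2, so it is its fixed point plus a multiple of
   beta^r.  That is a quadratic polynomial in c, and averaging it over the
   Binomial(N, p^(0)_k) law of c gives nu_k^(r); summing over k gives S^(r). *)

Lemma cnt_sum_indicator (R : realFieldType) n s (z : {ffun 'I_n -> 'I_s}) k :
  (cnt n s z k)%:R = \sum_(i < n) ((z i == k)%:R : R).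
Proof.
rewrite /cnt -[in LHS](mulr1n 1) -sumr_const big_mkcond /=.
by apply: eq_bigr => i _; rewrite inE; case: (z i == k).
Qed.

Lemma sum_cnt (R : realFieldType) n s (z : {ffun 'I_n -> 'I_s}) :
  \sum_(k < s) ((cnt n s z k)%:R : R) = n%:R.
Proof.
under eq_bigr do rewrite cnt_sum_indicator.
rewrite exchange_big -[n in RHS]card_ord -sumr_const /=.
apply: eq_bigr => i _; rewrite (bigD1 (z i)) //= eqxx big1 ?addr0 // => x.
by rewrite eq_sym => /negbTE ->.
Qed.

Section Sampling.

Variables (R : realFieldType) (n s : nat) (q : 'I_s -> R).
Hypothesis q_sum1 : \sum_(x < s) q x = 1.

Lemma sample_prob_indicators (k : 'I_s) (A : {set 'I_n}) :
  \sum_(z : {ffun 'I_n -> 'I_s}) sample_prob R n s q z *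
     \prod_(i in A) ((z i == k)%:R : R) = q k ^+ #|A|.
Proof.
pose w i x : R := if i \in A then (x == k)%:R else 1.
transitivity (\prod_(i < n) \sum_(x < s) q x * w i x).
  rewrite bigA_distr_bigA /=; apply: eq_bigr => z _.
  by rewrite /sample_prob big_split /= [in LHS](big_mkcond (mem A)).
transitivity (\prod_(i in A) q k); last by rewrite prodr_const.
rewrite [RHS]big_mkcond /=; apply: eq_bigr => i _; rewrite /w.
case: (i \in A); last by under eq_bigr do rewrite mulr1.
by rewrite (bigD1 k) //= eqxx mulr1 big1 ?addr0 // => x /negbTE ->; rewrite mulr0.
Qed.

Lemma sum_sample_prob : \sum_(z : {ffun 'I_n -> 'I_s}) sample_prob R n s q z = 1.
Proof.
have s_gt0 : (0 < s)%N.
  case: (posnP s) => [s0|//]; move: q_sum1; rewrite big1 => [/eqP|[x x_lt_s] _].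
    by rewrite eq_sym oner_eq0.
  by have := leq_trans x_lt_s (eq_leq s0).
pose k := Ordinal s_gt0.
rewrite -(expr0 (q k)) -(cards0 'I_n) -(sample_prob_indicators k).
by under [RHS]eq_bigr do rewrite big_set0 mulr1.
Qed.

Lemma sample_prob_indicator_pair (k : 'I_s) (j j' : 'I_n) :
  \sum_(z : {ffun 'I_n -> 'I_s}) sample_prob R n s q z *
     (((z j == k)%:R : R) * (z j' == k)%:R) = if j == j' then q k else q k ^+ 2.
Proof.
case: eqP => [<-|/eqP jj'].
  rewrite -(expr1 (q k)) -(cards1 j) -sample_prob_indicators.
  by apply: eq_bigr => z _; rewrite big_set1; case: (z j == k); rewrite ?mulr1 ?mulr0.
have -> : 2%N = #|[set j; j']| by rewrite cards2 jj'.
rewrite -sample_prob_indicators.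
by apply: eq_bigr => z _; rewrite big_setU1 ?big_set1 ?inE.
Qed.

Lemma mean_cnt (k : 'I_s) :
  \sum_(z : {ffun 'I_n -> 'I_s}) sample_prob R n s q z * (cnt n s z k)%:R = n%:R * q k.
Proof.
under eq_bigr do rewrite cnt_sum_indicator big_distrr.
rewrite exchange_big /= mulr_natl -[n in RHS]card_ord -sumr_const.
apply: eq_bigr => j _; rewrite -[q k]expr1 -(cards1 j) -sample_prob_indicators.
by apply: eq_bigr => z _; rewrite big_set1.
Qed.

Lemma second_moment_cnt (k : 'I_s) :
  \sum_(z : {ffun 'I_n -> 'I_s}) sample_prob R n s q z * (cnt n s z k)%:R ^+ 2
    = n%:R * q k + n%:R * (n%:R - 1) * q k ^+ 2.
Proof.
under eq_bigr do rewrite cnt_sum_indicator expr2 mulr_suml big_distrr /=.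
rewrite exchange_big /=.
under eq_bigr => j _.
  under eq_bigr do rewrite big_distrr /= big_distrr /=.
  rewrite exchange_big /=.
  under eq_bigr do rewrite sample_prob_indicator_pair.
  rewrite (bigD1 j) //= eqxx.
  under eq_bigr => j' /negbTE do rewrite eq_sym => ->.
  rewrite sumr_const cardC1 card_ord -mulr_natl -subn1 natrB; last first.
    exact: leq_ltn_trans (leq0n j) (ltn_ord j).
  over.
by rewrite sumr_const card_ord mulr_natl; ring.
Qed.

Lemma mean_quadratic_cnt (k : 'I_s) (a b : R) :
  \sum_(z : {ffun 'I_n -> 'I_s})
     sample_prob R n s q z * (a * (cnt n s z k)%:R ^+ 2 + b * (cnt n s z k)%:R)
  = a * (n%:R * q k + n%:R * (n%:R - 1) * q k ^+ 2) + b * (n%:R * q k).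
Proof.
under eq_bigr do rewrite mulrDr (mulrCA _ a) (mulrCA _ b).
by rewrite big_split /= -!big_distrr /= second_moment_cnt mean_cnt.
Qed.

End Sampling.

Lemma affine_recurrence (R : comRingType) (u : nat -> R) (a b l : R) :
  (forall m, u m.+1 = a + b * u m) -> a + b * l = l ->
  forall m, u m = l + b ^+ m * (u 0%N - l).
Proof.
move=> u_rec fix_l; have a_eq : a = l - b * l by rewrite -{1}fix_l addrK.
elim=> [|m IH]; first by rewrite expr0 mul1r addrC subrK.
by rewrite u_rec IH a_eq exprS; ring.
Qed.

Lemma stationary_denom_gt0 (R : realFieldType) (x y : R) :
  0 < x -> 0 <= y -> 0 < x * (x + y) + (x + 1) * y.
Proof. by move=> x_gt0 y_ge0; nra. Qed.

Section Retraining.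

Variables (R : realFieldType) (N Nh s : nat).
Hypothesis N_gt0 : (0 < N)%N.

Let N_neq0 : (N%:R : R) != 0. Proof. by rewrite pnatr_eq0 -lt0n. Qed.
Let NNh_neq0 : (N%:R + Nh%:R : R) != 0.
Proof. by rewrite -natrD pnatr_eq0 addn_eq0 negb_and -lt0n N_gt0. Qed.
Let D_neq0 : N%:R * (N%:R + Nh%:R) + (N%:R + 1) * Nh%:R != 0 :> R.
Proof. by rewrite gt_eqF // stationary_denom_gt0 ?ltr0n. Qed.

Lemma betaE : beta R N Nh = Nh%:R * (Nh%:R - 1) / (N%:R + Nh%:R) ^+ 2.
Proof. by rewrite /beta /alpha natrD; field; rewrite ?N_neq0 ?NNh_neq0. Qed.

Lemma beta_gt0_lt1 : (1 < N)%N -> (1 < Nh)%N -> 0 < beta R N Nh < 1.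
Proof.
move=> N_gt1 Nh_gt1; have N_ge2 : (2 : R) <= N%:R by rewrite ler_nat.
have Nh_ge2 : (2 : R) <= Nh%:R by rewrite ler_nat.
have NNh_gt0 : (0 : R) < N%:R + Nh%:R by lra.
rewrite betaE; apply/andP; split.
  by apply: divr_gt0; [nra | exact: exprn_gt0].
by rewrite ltr_pdivrMr ?exprn_gt0 // mul1r; nra.
Qed.

Section ConditionalMoments.

Variable z0 : {ffun 'I_N -> 'I_s}.

Local Notation Ex := (expect_from R N Nh s z0).
Local Notation on_simplex q := (\sum_(k < s) q k = 1).

Lemma sum_p_first : on_simplex (p_first R N s z0).
Proof. by rewrite /p_first -mulr_suml sum_cnt mulfV. Qed.

Lemma sum_p_next zh : on_simplex (p_next R N Nh s z0 zh).
Proof. by rewrite /p_next -mulr_suml big_split /= !sum_cnt -natrD mulfV // natrD. Qed.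

Lemma expect_fromSr m q g : Ex m.+1 q g = Ex m q (fun q' => Ex 1 q' g).
Proof. by elim: m q => [|m IH] q //=; apply: eq_bigr => zh _; rewrite -IH. Qed.

Lemma eq_expect_from m q f g :
  (forall q', on_simplex q' -> f q' = g q') -> on_simplex q -> Ex m q f = Ex m q g.
Proof.
move=> eq_fg; elim: m q => [|m IH] q q_sum1 /=; first exact: eq_fg.
by apply: eq_bigr => zh _; rewrite IH // sum_p_next.
Qed.

Lemma expect_fromD m q f g :
  Ex m q (fun q' => f q' + g q') = Ex m q f + Ex m q g.
Proof.
elim: m q => [|m IH] q //=; rewrite -big_split /=.
by apply: eq_bigr => zh _; rewrite IH mulrDr.
Qed.

Lemma expect_fromZ m q (a : R) f : Ex m q (fun q' => a * f q') = a * Ex m q f.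
Proof.
elim: m q => [|m IH] q //=; rewrite mulr_sumr.
by apply: eq_bigr => zh _; rewrite IH mulrCA.
Qed.

Lemma expect_from_cst m q (a : R) : on_simplex q -> Ex m q (fun=> a) = a.
Proof.
elim: m q => [|m IH] q q_sum1 //=.
under eq_bigr => zh _ do rewrite IH ?sum_p_next //.
by rewrite -mulr_suml sum_sample_prob // mul1r.
Qed.

Lemma expect_from_sum m q (f : 'I_s -> ('I_s -> R) -> R) :
  Ex m q (fun q' => \sum_(k < s) f k q') = \sum_(k < s) Ex m q (f k).
Proof.
elim: m q => [|m IH] q //=.
by under eq_bigr do rewrite IH big_distrr; rewrite exchange_big.
Qed.

Local Notation c k := ((cnt N s z0 k)%:R : R).

Lemma mean_step q k : on_simplex q ->
  Ex 1 q (fun q' => q' k) = (c k + Nh%:R * q k) / (N%:R + Nh%:R).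
Proof.
move=> q_sum1 /=; rewrite /p_next -natrD.
under eq_bigr do rewrite mulrA mulrDr.
by rewrite -mulr_suml big_split /= -big_distrl /= sum_sample_prob // mul1r mean_cnt.
Qed.

Lemma second_moment_step q k : on_simplex q ->
  Ex 1 q (fun q' => q' k ^+ 2) =
  (c k ^+ 2 + (2 * c k + 1) * Nh%:R * q k + Nh%:R * (Nh%:R - 1) * q k ^+ 2)
    / (N%:R + Nh%:R) ^+ 2.
Proof.
move=> q_sum1 /=; have d_neq0 := NNh_neq0; set d := N%:R + Nh%:R in d_neq0 *.
transitivity (\sum_(zh : {ffun 'I_Nh -> 'I_s})
  ((c k / d) ^+ 2 * sample_prob R Nh s q zh
   + sample_prob R Nh s q zh * (d^-2 * (cnt Nh s zh k)%:R ^+ 2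
                                + (2 * c k / d ^+ 2) * (cnt Nh s zh k)%:R))).
  by apply: eq_bigr => zh _; rewrite /p_next natrD -/d; field.
rewrite big_split /= -big_distrr /= sum_sample_prob // mean_quadratic_cnt //.
by field.
Qed.

Lemma mean_from_p_first m k :
  Ex m (p_first R N s z0) (fun q => q k) = c k / N%:R.
Proof.
elim: m => [|m IH] //; rewrite expect_fromSr.
rewrite (@eq_expect_from _ _ _
  (fun q => c k / (N%:R + Nh%:R) + Nh%:R / (N%:R + Nh%:R) * q k)); last first.
- exact: sum_p_first.
- by move=> q q_sum1; rewrite mean_step // mulrDl mulrAC.
rewrite expect_fromD expect_from_cst ?sum_p_first // expect_fromZ IH.
by field; rewrite ?N_neq0 ?NNh_neq0.
Qed.

(* Given the organic count x of e_k, E[(p^(r)_k)^2] follows an affine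
   recursion v |-> A + beta v; this is its fixed point. *)
Definition stationary_sq_moment (x : R) : R :=
  x * ((N%:R + 2 * Nh%:R) * x + Nh%:R)
    / (N%:R * (N%:R * (N%:R + Nh%:R) + (N%:R + 1) * Nh%:R)).

Lemma sq_moment_from_p_first m k :
  Ex m (p_first R N s z0) (fun q => q k ^+ 2) =
  stationary_sq_moment (c k)
    + beta R N Nh ^+ m * ((c k / N%:R) ^+ 2 - stationary_sq_moment (c k)).
Proof.
set A := (c k ^+ 2 + (2 * c k + 1) * Nh%:R * (c k / N%:R)) / (N%:R + Nh%:R) ^+ 2.
apply: (@affine_recurrence _ (fun m => Ex m _ _) A); last first.
  by rewrite /A /stationary_sq_moment betaE; field; rewrite D_neq0 N_neq0 NNh_neq0.
move=> {}m; rewrite expect_fromSr.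
rewrite (@eq_expect_from _ _ _ (fun q => c k ^+ 2 / (N%:R + Nh%:R) ^+ 2
  + ((2 * c k + 1) * Nh%:R / (N%:R + Nh%:R) ^+ 2 * q k
     + beta R N Nh * q k ^+ 2))); last first.
- exact: sum_p_first.
- by move=> q q_sum1; rewrite second_moment_step // betaE; field.
rewrite !expect_fromD !expect_fromZ expect_from_cst ?sum_p_first //.
by rewrite mean_from_p_first /A; field; rewrite ?N_neq0 ?NNh_neq0.
Qed.

End ConditionalMoments.

Variable p0 : 'I_s -> R.

Lemma S_round_sum_nu r :
  S_round R N Nh s p0 r = \sum_(k < s) nu_round R N Nh s p0 r k.
Proof.
rewrite /S_round /nu_round /Exp_round.
under eq_bigr do rewrite (expect_from_sum _ _ _ (fun k q => q k ^+ 2)) big_distrr.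
by rewrite exchange_big.
Qed.

Hypothesis p0_sum1 : \sum_(k < s) p0 k = 1.

Lemma nu_round_closed r k :
  nu_round R N Nh s p0 r.+1 k =
       p0 k / N%:R
         * ((1 + 2 * alpha R N Nh
             - (1 - 1 / N%:R) * alpha R N Nh * beta R N Nh ^+ r)
            / (1 + (1 + 1 / N%:R) * alpha R N Nh))
       + (1 - 1 / N%:R) * p0 k ^+ 2
         * ((1 + alpha R N Nh + alpha R N Nh / N%:R * beta R N Nh ^+ r)
            / (1 + (1 + 1 / N%:R) * alpha R N Nh)).
Proof.
rewrite /nu_round /Exp_round /=.
under eq_bigr do rewrite sq_moment_from_p_first //.
set t := beta R N Nh ^+ r.
pose D : R := N%:R * (N%:R + Nh%:R) + (N%:R + 1) * Nh%:R.
transitivity (\sum_(z0 : {ffun 'I_N -> 'I_s}) sample_prob R N s p0 z0 *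
  (((1 - t) * (N%:R + 2 * Nh%:R) / (N%:R * D) + t / N%:R ^+ 2) * (cnt N s z0 k)%:R ^+ 2
   + (1 - t) * Nh%:R / (N%:R * D) * (cnt N s z0 k)%:R)).
  apply: eq_bigr => z0 _; rewrite /stationary_sq_moment /D.
  by field; rewrite D_neq0 N_neq0.
rewrite mean_quadratic_cnt // /alpha natrD.
by rewrite /D; field; rewrite NNh_neq0 N_neq0 D_neq0.
Qed.

Lemma S_round_closed r :
  S_round R N Nh s p0 r.+1 =
    (1 / N%:R * (1 + 2 * alpha R N Nh)
       + (1 - 1 / N%:R) * (1 + alpha R N Nh) * S0 R s p0)
      / (1 + (1 + 1 / N%:R) * alpha R N Nh)
    - 1 / N%:R * (1 - 1 / N%:R)
      * ((1 - S0 R s p0) * alpha R N Nh * beta R N Nh ^+ r)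
      / (1 + (1 + 1 / N%:R) * alpha R N Nh).
Proof.
rewrite S_round_sum_nu; under eq_bigr do rewrite nu_round_closed.
rewrite big_split /= -!mulr_suml -mulr_sumr p0_sum1 -/(S0 R s p0).
by rewrite /alpha natrD; field; rewrite NNh_neq0 N_neq0 D_neq0.
Qed.

End Retraining.

Theorem mainTheorem8 (R : realFieldType) (s N Nh : nat) (p0 : 'I_s -> R) :
  (2 <= s)%N -> (1 <= N)%N -> (1 <= Nh)%N ->
  (forall k, 0 <= p0 k) -> \sum_(k < s) p0 k = 1 ->
  (forall r : nat,
     S_round R N Nh s p0 r.+1 =
       (1 / N%:R * (1 + 2 * alpha R N Nh)
          + (1 - 1 / N%:R) * (1 + alpha R N Nh) * S0 R s p0)
         / (1 + (1 + 1 / N%:R) * alpha R N Nh)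
       - 1 / N%:R * (1 - 1 / N%:R)
         * ((1 - S0 R s p0) * alpha R N Nh * beta R N Nh ^+ r)
         / (1 + (1 + 1 / N%:R) * alpha R N Nh))
  /\
  (forall (r : nat) (k : 'I_s),
     nu_round R N Nh s p0 r.+1 k =
       p0 k / N%:R
         * ((1 + 2 * alpha R N Nh
             - (1 - 1 / N%:R) * alpha R N Nh * beta R N Nh ^+ r)
            / (1 + (1 + 1 / N%:R) * alpha R N Nh))
       + (1 - 1 / N%:R) * p0 k ^+ 2
         * ((1 + alpha R N Nh + alpha R N Nh / N%:R * beta R N Nh ^+ r)
            / (1 + (1 + 1 / N%:R) * alpha R N Nh)))
  /\
  ((1 < N)%N -> (1 < Nh)%N -> 0 < beta R N Nh < 1).
Proof.
move=> _ N_gt0 _ _ p0_sum1; split; [|split].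
- exact: S_round_closed.
- exact: nu_round_closed.
- exact: beta_gt0_lt1.
Qed.
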